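(* For a graph $G$ with no isolated vertex, $\gamma_{(2,2,1)}(G)=3$ if and only if $\gamma(G)=1$ or $\gamma_{\times2,t}(G)=3$.
   Context: All graphs are finite and simple; $N(v)$ is the open neighbourhood. $\gamma_{(2,2,1)}(G)$ is the minimum of $\sum_v f(v)$ over functions $f:V(G)\to\{0,1,2\}$ such that $\sum_{u\in N(v)}f(u)\ge 2$ whenever $f(v)\in\{0,1\}$ and $\sum_{u\in N(v)}f(u)\ge1$ whenever $f(v)=2$. $\gamma(G)$ is the domination number and $\gamma_{\times2,t}(G)$ is the minimum size of $S\subseteq V(G)$ such that every vertex has at least two neighbours in $S$ (defined when $G$ has minimum degree at least $2$). *)

From mathcomp Require Import all_boot.
Set Implicit Arguments. Unset Strict Implicit. Unset Printing Implicit Defensive.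

Definition simple_graph (T : finType) (e : rel T) : Prop :=
  symmetric e /\ irreflexive e.

Definition nbhd (T : finType) (e : rel T) (v : T) : {set T} := [set u | e v u].

Definition no_isolated (T : finType) (e : rel T) : Prop :=
  forall v : T, exists u, e v u.

Definition is_221_fun (T : finType) (e : rel T) (f : {ffun T -> 'I_3}) : bool :=
  [forall v : T,
     if (f v : nat) == 2 then 1 <= \sum_(u in nbhd e v) (f u : nat)
     else 2 <= \sum_(u in nbhd e v) (f u : nat)].

Definition weight (T : finType) (f : {ffun T -> 'I_3}) : nat := \sum_(v : T) (f v : nat).

(* gamma_(2,2,1)(G): minimum weight (default 2|V|, the weight of the
   constant-2 function, which is valid when there is no isolated vertex). *)
Definition gamma221 (T : finType) (e : rel T) : nat :=
  \big[minn/(#|T|).*2]_(f : {ffun T -> 'I_3} | is_221_fun e f) weight f.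

Definition dominating (T : finType) (e : rel T) (S : {set T}) : bool :=
  [forall v : T, (v \in S) || [exists u in S, e v u]].

(* domination number (default |V|: V itself dominates) *)
Definition gamma (T : finType) (e : rel T) : nat :=
  \big[minn/#|T|]_(S : {set T} | dominating e S) #|S|.

Definition dtd (T : finType) (e : rel T) (S : {set T}) : bool :=
  [forall v : T, 2 <= #|nbhd e v :&: S|].

(* gamma_{x2,t}(G): Some (minimum size) if a double total dominating set
   exists (iff min degree >= 2), None if it is undefined. *)
Definition gamma_x2t (T : finType) (e : rel T) : option nat :=
  if [exists S : {set T}, dtd e S]
  then Some (\big[minn/#|T|]_(S : {set T} | dtd e S) #|S|)
  else None.

From HB Require Import structures.
From mathcomp Require Import all_boot zify.
Set Implicit Arguments. Unset Strict Implicit. Unset Printing Implicit Defensive.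

(* A (2,2,1)-function of weight 3 either takes the value 2 at some vertex a,
   and then every other vertex, of value at most 1 and needing neighbourhood
   weight 2, must be adjacent to a; or it is 0/1-valued, hence the indicator
   of a 3-set S, and the (2,2,1) conditions say exactly that S is double total
   dominating.  Conversely, a universal vertex a with a neighbour b carries the
   function 2 at a, 1 at b, and a double total dominating 3-set its indicator.
   As (2,2,1)-functions have weight at least 3 and double total dominating
   sets at least 3 elements, the minima equal these values exactly when such
   witnesses exist. *)

(* [minn] has no unit in [nat], so only the semigroup lemmas of bigop apply. *)
HB.instance Definition _ := SemiGroup.isComLaw.Build nat minn minnA minnC.

Section BigMinn.
Variables (I : finType) (P : pred I) (F : I -> nat) (d : nat).

Lemma bigminn_le i : P i -> \big[minn/d]_(j | P j) F j <= F i.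
Proof. by move=> Pi; rewrite (big_rem_AC _ _ _ _ (mem_index_enum i)) Pi geq_minl. Qed.

Lemma bigminn_eq i :
  P i -> F i <= d -> (forall j, P j -> F i <= F j) ->
  \big[minn/d]_(j | P j) F j = F i.
Proof.
move=> Pi Fi_le_d Fi_min; apply/eqP; rewrite eqn_leq bigminn_le //=.
by elim/big_ind: _ => // x y; rewrite leq_min => ->.
Qed.

Lemma bigminn_attained :
  \big[minn/d]_(j | P j) F j = d \/ exists2 i, P i & \big[minn/d]_(j | P j) F j = F i.
Proof.
elim/big_ind: _; [by left | | by move=> i Pi; right; exists i].
by move=> x y; rewrite /minn; case: ifP.
Qed.

End BigMinn.

Section Graph.
Variables (T : finType) (e : rel T).
Implicit Types (f : {ffun T -> 'I_3}) (S : {set T}).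

Definition indicator S : {ffun T -> 'I_3} := [ffun v => inord (v \in S)].

Lemma indicatorE S v : (indicator S v : nat) = (v \in S).
Proof. by rewrite ffunE inordK // ltnS (leq_trans (leq_b1 _)). Qed.

Lemma sum_indicator (A S : {set T}) :
  \sum_(u in A) indicator S u = #|A :&: S|.
Proof.
rewrite -sum1_card [RHS](eq_bigl (fun u => (u \in A) && (u \in S))) => [|u]; last by rewrite inE.
by rewrite big_mkcondr; apply: eq_bigr => u _; rewrite indicatorE; case: (u \in S).
Qed.

Lemma weight_indicator S : weight (indicator S) = #|S|.
Proof. by rewrite -{2}(setTI S) -sum_indicator; apply: eq_bigl => v; rewrite inE. Qed.

Lemma is_221_indicator S : is_221_fun e (indicator S) = dtd e S.
Proof.
apply: eq_forallb => v; rewrite indicatorE sum_indicator.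
by case: (v \in S).
Qed.

Lemma indicator_support f :
  (forall v, f v != 2 :> nat) -> f = indicator [set v | 0 < f v].
Proof.
move=> f_ne2; apply/ffunP => v; apply/val_inj; rewrite /= indicatorE inE.
by have := ltn_ord (f v); have := f_ne2 v; case: (f v : nat) => [|[|[|]]].
Qed.

Lemma weight_le_double f : weight f <= #|T|.*2.
Proof.
rewrite /weight -muln2 -sum_nat_const.
by apply: leq_sum => v _; rewrite -ltnS.
Qed.

Lemma gamma_eq1 : gamma e = 1 <-> exists a, dominating e [set a].
Proof.
split => [gamma1|[a dom_a]].
  have [|[S dom_S]] := bigminn_attained (dominating e) (fun S => #|S|) #|T|;
    rewrite -/(gamma e) gamma1.
  - rewrite -cardsT => /esym/eqP/cards1P[a Ta].
    by exists a; rewrite -Ta; apply/forallP => v; rewrite inE.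
  - by move=> /esym/eqP/cards1P[a Sa]; exists a; rewrite -Sa.
rewrite /gamma (bigminn_eq (i := [set a])) ?max_card ?cards1 //.
move=> S /forallP/(_ a); rewrite card_gt0.
by apply: contraTneq => ->; rewrite inE; apply/existsP => -[u]; rewrite inE.
Qed.

Section Irreflexive.
Hypothesis e_irr : irreflexive e.

Lemma notin_nbhd v : v \notin nbhd e v.
Proof. by rewrite inE e_irr. Qed.

Lemma sum_le_weight f v (X : {set T}) :
  v \notin X -> f v + \sum_(u in X) f u <= weight f.
Proof.
move=> vX; rewrite /weight [leqRHS](bigD1 v) //= leq_add2l.
rewrite [leqRHS]big_mkcond [leqLHS]big_mkcond /=.
apply: leq_sum => u _; case: ifP => // uX.
by have -> : u != v by apply: contraNneq vX => <-.
Qed.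

Lemma weight_221_ge3 f (x : T) : is_221_fun e f -> 3 <= weight f.
Proof.
move/forallP=> f221.
have [v fv_gt0] : exists v, 0 < f v.
  apply/existsP; apply: contraTT (f221 x) => /existsPn f0.
  have f0E u : f u = 0 :> nat by apply/eqP; rewrite -leqn0 leqNgt f0.
  by rewrite f0E big1 // => u _; rewrite f0E.
have := sum_le_weight f (notin_nbhd v); have := f221 v.
by have := ltn_ord (f v); case: eqP; lia.
Qed.

Lemma dominating_of_weight3 f a :
  is_221_fun e f -> weight f = 3 -> f a = 2 :> nat -> dominating e [set a].
Proof.
move=> /forallP f221 w3 fa2; apply/forallP => v; rewrite inE.
case: (eqVneq v a) => //= va; apply/existsP; exists a; rewrite inE eqxx /=.
apply: contraT => /negbTE nva.
have vX : v \notin a |: nbhd e v by rewrite in_setU1 (negbTE va) notin_nbhd.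
have := sum_le_weight f vX; rewrite big_setU1 ?inE ?nva //= fa2 w3.
by have := f221 v; have := ltn_ord (f v); case: eqP; lia.
Qed.

Lemma dtd_card_ge3 S (x : T) : dtd e S -> 3 <= #|S|.
Proof.
move/forallP=> S_dtd.
have /card_gt0P[u] : 0 < #|nbhd e x :&: S| by apply: leq_trans (S_dtd x).
rewrite inE => /andP[_ uS].
have sub : nbhd e u :&: S \subset S :\ u.
  apply/subsetP => w; rewrite !inE => /andP[euw ->]; rewrite andbT.
  by apply: contraTneq euw => ->; rewrite e_irr.
by rewrite (cardsD1 u) uS add1n ltnS (leq_trans (S_dtd u) (subset_leq_card sub)).
Qed.

Definition two_one_fun (a b : T) : {ffun T -> 'I_3} :=
  [ffun v => inord (if v == a then 2 else v == b)].

Lemma two_one_funE a b v : two_one_fun a b v = (if v == a then 2 else v == b) :> nat.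
Proof. by rewrite ffunE inordK //; case: ifP => // _; case: (v == b). Qed.

Lemma two_one_fun_221 a b :
  dominating e [set a] -> e a b -> is_221_fun e (two_one_fun a b) /\ weight (two_one_fun a b) = 3.
Proof.
move=> /forallP dom_a eab.
have ba : b != a by apply: contraTneq eab => ->; rewrite e_irr.
split.
  apply/forallP => v; rewrite two_one_funE; case: (eqVneq v a) => [->|va] /=.
    by rewrite (bigD1 b) ?inE //= two_one_funE (negbTE ba) eqxx.
  have eva : e v a.
    by move: (dom_a v); rewrite inE (negbTE va) /= => /existsP[u /andP[/set1P-> ]].
  by rewrite (bigD1 a) ?inE //= two_one_funE eqxx; case: (v == b).
rewrite /weight (bigD1 a) //= (bigD1 b) //= !two_one_funE eqxx (negbTE ba) eqxx big1 //.
by move=> u /andP[ua ub]; rewrite two_one_funE (negbTE ua) (negbTE ub).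
Qed.

Lemma gamma221_eq3 : gamma221 e = 3 <-> exists2 f, is_221_fun e f & weight f = 3.
Proof.
split => [g3|[f f221 wf3]].
  have [|[f f221]] := bigminn_attained (is_221_fun e) (@weight T) (#|T|).*2;
    rewrite -/(gamma221 e) g3.
  - by move/(congr1 odd); rewrite odd_double.
  - by move/esym; exists f.
have /card_gt0P[x _] : 0 < #|T| by have := weight_le_double f; rewrite wf3; case: #|T|.
rewrite /gamma221 (bigminn_eq (i := f)) // => [|g /(weight_221_ge3 x)].
  exact: weight_le_double.
by rewrite wf3.
Qed.

Lemma gamma_x2t_eq3 : gamma_x2t e = Some 3 <-> exists2 S, dtd e S & #|S| = 3.
Proof.
rewrite /gamma_x2t; case: existsP => [[S0 S0_dtd]|no_dtd]; last first.
  by split => // -[S S_dtd _]; case: no_dtd; exists S.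
split => [[g3]|[S S_dtd S3]].
  have [|[S S_dtd]] := bigminn_attained (dtd e) (fun S => #|S|) #|T|;
    rewrite g3 => S3; last by exists S.
  exists setT; last by rewrite cardsT -S3.
  apply/forallP => v; apply: leq_trans (forallP S0_dtd v) _.
  by apply/subset_leq_card/setIS/subsetT.
have /card_gt0P[x _] : 0 < #|S| by rewrite S3.
congr Some; rewrite -S3; apply: bigminn_eq => // [|S' /(dtd_card_ge3 x)].
  exact: max_card.
by rewrite S3.
Qed.

End Irreflexive.
End Graph.

Theorem theorem25 (T : finType) (e : rel T) :
  simple_graph e -> no_isolated e ->
  gamma221 e = 3 <-> (gamma e = 1 \/ gamma_x2t e = Some 3).
Proof.
move=> [_ e_irr] e_noiso; split => [/(gamma221_eq3 e_irr)[f f221 wf3]|gamma_cases].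
- have [a /eqP fa2|no2] := pickP (fun a => f a == 2 :> nat).
    by left; apply/gamma_eq1; exists a; apply: dominating_of_weight3 fa2.
  right; apply/(gamma_x2t_eq3 e_irr); exists [set v | 0 < f v].
    by rewrite -is_221_indicator -indicator_support // => v; rewrite no2.
  by rewrite -weight_indicator -indicator_support // => v; rewrite no2.
- apply/(gamma221_eq3 e_irr).
  case: gamma_cases => [/gamma_eq1[a dom_a]|/(gamma_x2t_eq3 e_irr)[S S_dtd S3]].
  + have [b eab] := e_noiso a.
    by have [f221 w3] := two_one_fun_221 e_irr dom_a eab; exists (two_one_fun a b).
  + by exists (indicator S); rewrite ?is_221_indicator ?weight_indicator.
Qed.
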